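(* Let $\lambda_0,\lambda_1$ be real and $a<b$. The smallest constant $C$ such that every $f\in C^2[a,b]$ with $f(a)=f(b)=0$ satisfies $|f(t)|\le C\max_{\theta\in[a,b]}|L_{(\lambda_0,\lambda_1)}f(\theta)|$ for all $t\in[a,b]$ is $C=M^{a,b}_{\lambda_0,\lambda_1}$. Moreover $\Omega^{a,b}_{\lambda_0,\lambda_1,0}(t)>0$ for all $t\in(a,b)$.
   Context: For real $\lambda_0,\dots,\lambda_N$, $L_{(\lambda_0,\dots,\lambda_N)}=\prod_{j=0}^N(\frac{d}{dt}-\lambda_j)$ and $E(\lambda_0,\dots,\lambda_N)=\{f\in C^{N+1}(\mathbb{R}):L_{(\lambda_0,\dots,\lambda_N)}f=0\}$. For real $\lambda_0,\lambda_1$ and $a<b$, $\Omega^{a,b}_{\lambda_0,\lambda_1,0}$ denotes the unique $u\in E(\lambda_0,\lambda_1,0)$ with $u(a)=u(b)=0$ and $L_{(\lambda_0,\lambda_1)}u\equiv-1$, and $M^{a,b}_{\lambda_0,\lambda_1}:=\max_{t\in[a,b]}|\Omega^{a,b}_{\lambda_0,\lambda_1,0}(t)|$. *)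

From Stdlib Require Import Reals Lra List.
From Coquelicot Require Import Coquelicot.
Import ListNotations.
Open Scope R_scope.

Definition Dm (lam : R) (f : R -> R) : R -> R :=
  fun t => Derive f t - lam * f t.

Definition Lop (ls : list R) (f : R -> R) : R -> R := fold_right Dm f ls.

Definition Ck (k : nat) (f : R -> R) : Prop :=
  (forall (n : nat) (x : R), (n <= k)%nat -> ex_derive_n f n x) /\
  (forall x : R, continuous (Derive_n f k) x).

(** E(lam_0,...,lam_N) : C^{N+1}(R) solutions of L f = 0 (N+1 = length ls) *)
Definition Espace (ls : list R) (f : R -> R) : Prop :=
  Ck (length ls) f /\ forall t, Lop ls f t = 0.

Definition is_Omega (a b lam0 lam1 : R) (u : R -> R) : Prop :=
  Espace [lam0; lam1; 0] u /\ u a = 0 /\ u b = 0 /\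
  (forall t, Lop [lam0; lam1] u t = -1).

Definition sup_on (a b : R) (h : R -> R) : R :=
  real (Lub_Rbar (fun y => exists t, a <= t <= b /\ y = h t)).

(** g is the derivative of f on [a,b] (one-sided at the endpoints) *)
Definition has_deriv_on (a b : R) (f g : R -> R) : Prop :=
  forall t, a <= t <= b -> forall eps, 0 < eps -> exists delta, 0 < delta /\
    forall s, a <= s <= b -> 0 < Rabs (s - t) < delta ->
      Rabs ((f s - f t) / (s - t) - g t) < eps.

Definition cont_on (a b : R) (g : R -> R) : Prop :=
  forall t, a <= t <= b -> forall eps, 0 < eps -> exists delta, 0 < delta /\
    forall s, a <= s <= b -> Rabs (s - t) < delta -> Rabs (g s - g t) < eps.

Definition C2_on (a b : R) (f f1 f2 : R -> R) : Prop :=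
  has_deriv_on a b f f1 /\ has_deriv_on a b f1 f2 /\ cont_on a b f2.

(** L_(lam0,lam1) f = (D - lam0)(D - lam1) f on [a,b], for f in C^2[a,b] *)
Definition L2_on (lam0 lam1 : R) (f f1 f2 : R -> R) : R -> R :=
  fun t => (f2 t - lam1 * f1 t) - lam0 * (f1 t - lam1 * f t).

Definition admissible_const (a b lam0 lam1 C : R) : Prop :=
  forall f f1 f2 : R -> R, C2_on a b f f1 f2 -> f a = 0 -> f b = 0 ->
    forall t, a <= t <= b ->
      Rabs (f t) <= C * sup_on a b (fun th => Rabs (L2_on lam0 lam1 f f1 f2 th)).

From Pilot Require Import Defs.
From Stdlib Require Import Reals Lra Lia List.
From Coquelicot Require Import Coquelicot.
Import ListNotations.
Open Scope R_scope.

(** The heart of the proof is a maximum principle for L (Section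
    MaximumPrinciple): if G vanishes at a and b, then for every interior t
    there is an interior e with L G (e) = - k G(t), k > 0.  It follows from
    the factorisation L = e^{l0 x} D e^{(l1-l0) x} D e^{-l1 x} and three
    applications of the mean value theorem.  Hence L G <= 0 forces G >= 0 and
    L G < 0 forces G > 0.

    With Omega solving L u = -1, u(a) = u(b) = 0: positivity of Omega is the
    strict principle; for f in C^2[a,b] vanishing at a, b with |L f| <= K, the
    weak principle applied to K u -+ f gives |f| <= K u <= K sup|u|, so sup|u| is
    admissible; and it is optimal because f = u itself has |L u| = 1.
    Existence of Omega is shown by solving the two first-order equations
    (D - l0) Q = -1 and (D - l1) u = Q by variation of constants, adjusting
    one free constant to obtain u(b) = 0.  Preliminary sections relate the
    closed-interval notions of Defs (derivatives, continuity, supremum on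
    [a,b]) to Coquelicot's via extension by clamping. *)

(** Clamping to [a,b], used to extend a function given on [a,b] to all of R. *)
Definition clamp (a b x : R) : R := Rmax a (Rmin b x).

Lemma clamp_in a b x : a <= b -> a <= clamp a b x <= b.
Proof. intros. unfold clamp, Rmax, Rmin. repeat destruct Rle_dec; lra. Qed.

Lemma clamp_id a b x : a <= x <= b -> clamp a b x = x.
Proof. intros. unfold clamp, Rmax, Rmin. repeat destruct Rle_dec; lra. Qed.

Lemma clamp_lipschitz a b s x :
  a <= b -> Rabs (clamp a b s - clamp a b x) <= Rabs (s - x).
Proof.
intros. unfold clamp, Rmax, Rmin, Rabs.
repeat destruct Rle_dec; repeat destruct Rcase_abs; lra.
Qed.

Lemma continuous_of_is_derive (f : R -> R) x l : is_derive f x l -> continuous f x.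
Proof.
intros Hf. apply (ex_derive_continuous (K := R_AbsRing) (V := R_NormedModule)).
now exists l.
Qed.

Lemma continuous_clamp_ext a b g : a <= b -> cont_on a b g ->
  forall x, continuous (fun s => g (clamp a b s)) x.
Proof.
intros hab Hg x. apply continuity_pt_filterlim.
intros eps Heps.
destruct (Hg (clamp a b x) (clamp_in a b x hab) eps Heps) as [d [Hd Hclose]].
exists d; split; [exact Hd|]. intros s [_ Hs]. simpl in *. unfold R_dist in *.
apply Hclose; [apply clamp_in; exact hab|].
eapply Rle_lt_trans; [apply clamp_lipschitz; exact hab | exact Hs].
Qed.

Lemma cont_on_of_continuous (g : R -> R) a b :
  (forall x, continuous g x) -> cont_on a b g.
Proof.
intros Hc t _ eps Heps.
pose proof (proj2 (continuity_pt_filterlim g t) (Hc t) eps Heps) as [d [Hd Hclose]].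
exists d; split; [exact Hd|]. intros s _ Hs.
destruct (Req_dec s t) as [->|Hne].
- rewrite Rminus_eq_0, Rabs_R0. exact Heps.
- apply (Hclose s). split; [split; [exact I| auto]| exact Hs].
Qed.

Lemma cont_on_of_has_deriv_on a b f g : has_deriv_on a b f g -> cont_on a b f.
Proof.
intros Hd t Ht eps He.
destruct (Hd t Ht 1 Rlt_0_1) as [d [Hd0 Hquot]].
set (M := Rabs (g t) + 1).
assert (HM : 0 < M) by (unfold M; pose proof (Rabs_pos (g t)); lra).
exists (Rmin d (eps / M)). split.
{ apply Rmin_pos; [exact Hd0| apply Rdiv_lt_0_compat; assumption]. }
intros s Hs Hst.
destruct (Req_dec s t) as [->|Hne].
{ rewrite Rminus_eq_0, Rabs_R0. exact He. }
assert (Hd1 : Rabs (s - t) < d) by (eapply Rlt_le_trans; [exact Hst| apply Rmin_l]).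
assert (Hd2 : Rabs (s - t) < eps / M) by (eapply Rlt_le_trans; [exact Hst| apply Rmin_r]).
assert (Hpos : 0 < Rabs (s - t)) by (apply Rabs_pos_lt; lra).
specialize (Hquot s Hs (conj Hpos Hd1)).
set (q := (f s - f t) / (s - t)) in Hquot.
assert (Hq : Rabs q < M).
{ pose proof (Rabs_triang (q - g t) (g t)) as Htri.
  replace (q - g t + g t) with q in Htri by ring. unfold M. lra. }
replace (f s - f t) with (q * (s - t)) by (unfold q; field; lra).
rewrite Rabs_mult.
apply Rlt_le_trans with (M * Rabs (s - t)); [apply Rmult_lt_compat_r; assumption|].
apply Rle_trans with (M * (eps / M)); [apply Rmult_le_compat_l; lra|].
right; field; lra.
Qed.

Lemma is_derive_clamp_ext a b f g t : has_deriv_on a b f g -> a < t < b ->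
  is_derive (fun s => f (clamp a b s)) t (g t).
Proof.
intros Hd Ht. apply is_derive_Reals. intros eps He.
destruct (Hd t ltac:(lra) eps He) as [d [Hd0 Hquot]].
assert (Hr : 0 < Rmin d (Rmin (t - a) (b - t))) by (repeat apply Rmin_pos; lra).
exists (mkposreal _ Hr). intros h Hh0 Hh. simpl in Hh.
assert (Hhd : Rabs h < d) by (eapply Rlt_le_trans; [exact Hh| apply Rmin_l]).
assert (Hin : a <= t + h <= b).
{ assert (Hh' : Rabs h < Rmin (t - a) (b - t))
    by (eapply Rlt_le_trans; [exact Hh| apply Rmin_r]).
  pose proof (Rmin_l (t - a) (b - t)). pose proof (Rmin_r (t - a) (b - t)).
  revert Hh'; unfold Rabs; destruct Rcase_abs; intros; lra. }
rewrite (clamp_id a b (t + h)), (clamp_id a b t) by lra.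
replace h with (t + h - t) at 2 by ring.
apply Hquot; [exact Hin|]. replace (t + h - t) with h by ring.
split; [apply Rabs_pos_lt; exact Hh0| exact Hhd].
Qed.

Lemma has_deriv_on_of_is_derive (F F' : R -> R) a b :
  (forall x, is_derive F x (F' x)) -> has_deriv_on a b F F'.
Proof.
intros Hd t _ eps He. destruct (proj1 (is_derive_Reals _ _ _) (Hd t) eps He) as [d Hd'].
exists d; split; [apply cond_pos|].
intros s _ [H0 H1]. specialize (Hd' (s - t)).
replace (t + (s - t)) with s in Hd' by ring. apply Hd'; [|exact H1].
intro Heq; rewrite Heq, Rabs_R0 in H0; lra.
Qed.

Lemma sup_on_ub a b h B : (forall t, a <= t <= b -> h t <= B) ->
  forall t, a <= t <= b -> h t <= sup_on a b h.
Proof.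
intros HB t Ht. unfold sup_on.
destruct (Lub_Rbar_correct (fun y => exists t, a <= t <= b /\ y = h t)) as [Hub Hlub].
assert (Hlow : Rbar_le (h t) (Lub_Rbar (fun y => exists t, a <= t <= b /\ y = h t)))
  by (apply Hub; exists t; auto).
assert (Hup : Rbar_le (Lub_Rbar (fun y => exists t, a <= t <= b /\ y = h t)) B)
  by (apply Hlub; intros y [s [Hs ->]]; apply HB, Hs).
destruct (Lub_Rbar _); simpl in *; tauto.
Qed.

Lemma sup_on_le a b h C : a <= b -> (forall t, a <= t <= b -> h t <= C) ->
  sup_on a b h <= C.
Proof.
intros hab HB. unfold sup_on.
destruct (Lub_Rbar_correct (fun y => exists t, a <= t <= b /\ y = h t)) as [Hub Hlub].
assert (Hlow : Rbar_le (h a) (Lub_Rbar (fun y => exists t, a <= t <= b /\ y = h t)))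
  by (apply Hub; exists a; split; [lra| reflexivity]).
assert (Hup : Rbar_le (Lub_Rbar (fun y => exists t, a <= t <= b /\ y = h t)) C)
  by (apply Hlub; intros y [s [Hs ->]]; apply HB, Hs).
destruct (Lub_Rbar _); simpl in *; tauto.
Qed.

Lemma sup_on_ub_continuous a b h : a <= b ->
  (forall x, continuous (fun s => h (clamp a b s)) x) ->
  forall t, a <= t <= b -> h t <= sup_on a b h.
Proof.
intros hab Hc.
destruct (continuity_ab_maj (fun s => h (clamp a b s)) a b hab) as [m [Hm _]].
{ intros x _. apply continuity_pt_filterlim, Hc. }
apply (sup_on_ub a b h (h (clamp a b m))).
intros t Ht. rewrite <- (clamp_id a b t Ht). apply Hm, Ht.
Qed.

Lemma mvt_interior F dF x y : x < y ->
  (forall c, x < c < y -> is_derive F c (dF c)) ->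
  (forall c, x <= c <= y -> continuity_pt F c) ->
  exists c, x < c < y /\ F y - F x = dF c * (y - x).
Proof.
intros hxy Hd Hc.
set (prF := fun c (Hc : x < c < y) => exist (fun l => derivable_pt_lim F c l) (dF c)
   (proj1 (is_derive_Reals _ _ _) (Hd c Hc))).
set (prId := fun c (_ : x < c < y) => derivable_pt_id c).
destruct (MVT F id x y prF prId hxy Hc) as [c [Hcin Heq]].
{ intros; apply derivable_continuous_pt, derivable_pt_id. }
exists c; split; [exact Hcin|].
rewrite (derive_pt_eq_0 F c (dF c) (prF c Hcin)) in Heq by (apply is_derive_Reals; auto).
rewrite (derive_pt_eq_0 id c 1 (prId c Hcin)) in Heq by (apply derivable_pt_lim_id).
unfold id in Heq. lra.
Qed.

Lemma is_derive_exp_weight c (G : R -> R) x g : is_derive G x g ->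
  is_derive (fun s => exp (c * s) * G s) x (exp (c * x) * (g + c * G x)).
Proof.
intros HG.
assert (He : is_derive (fun s => exp (c * s)) x (c * exp (c * x)))
  by (auto_derive; [exact I| ring]).
replace (exp (c * x) * (g + c * G x))
  with (plus (mult (c * exp (c * x)) (G x)) (mult (exp (c * x)) g))
  by (unfold plus, mult; simpl; ring).
apply (is_derive_mult _ _ x _ _ He HG). intros; apply Rmult_comm.
Qed.

Lemma continuous_exp_weight c (G : R -> R) x : continuous G x ->
  continuous (fun s => exp (c * s) * G s) x.
Proof.
intros HG. apply (continuous_mult (fun s => exp (c * s)) G x); [|exact HG].
apply (continuous_of_is_derive _ _ (c * exp (c * x))). auto_derive; [exact I| ring].
Qed.

(** With H = e^{-l1 x} G
    and W = e^{-l0 x}(G' - l1 G), one has H' = e^{(l0-l1)x} W and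
    W' = e^{-l0 x} L G.  Three applications of the mean value theorem (to H on
    [a,t] and [t,b], then to W between the two points found) show that the
    value of L G at some interior point is a negative multiple of G t. *)
Section MaximumPrinciple.
Variables (a b l0 l1 : R) (G G1 G2 : R -> R).
Hypothesis G_cont : forall x, a <= x <= b -> continuous G x.
Hypothesis G1_cont : forall x, a <= x <= b -> continuous G1 x.
Hypothesis G_der : forall x, a < x < b -> is_derive G x (G1 x).
Hypothesis G1_der : forall x, a < x < b -> is_derive G1 x (G2 x).
Hypothesis G_a : G a = 0.
Hypothesis G_b : G b = 0.

Lemma L2_on_opposite_sign t : a < t < b ->
  exists e k, a < e < b /\ 0 < k /\ L2_on l0 l1 G G1 G2 e = - k * G t.
Proof.
intros Ht.
set (r x := G1 x - l1 * G x).
set (H x := exp (- l1 * x) * G x).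
set (W x := exp (- l0 * x) * r x).
assert (r_cont : forall x, a <= x <= b -> continuous r x).
{ intros x Hx. apply (continuous_minus G1 (fun s => l1 * G s)); [apply G1_cont, Hx|].
  apply (continuous_scal_r l1 G), G_cont, Hx. }
assert (H_der : forall x, a < x < b -> is_derive H x (exp (- l1 * x) * r x)).
{ intros x Hx. replace (r x) with (G1 x + - l1 * G x) by (unfold r; ring).
  apply is_derive_exp_weight, G_der, Hx. }
assert (W_der : forall x, a < x < b ->
  is_derive W x (exp (- l0 * x) * L2_on l0 l1 G G1 G2 x)).
{ intros x Hx.
  replace (L2_on l0 l1 G G1 G2 x) with ((G2 x - l1 * G1 x) + - l0 * r x)
    by (unfold L2_on, r; ring).
  apply is_derive_exp_weight.
  apply (is_derive_minus G1 (fun s => l1 * G s)); [apply G1_der, Hx|].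
  apply is_derive_scal, G_der, Hx. }
assert (H_cont : forall x, a <= x <= b -> continuity_pt H x)
  by (intros x Hx; apply continuity_pt_filterlim, continuous_exp_weight, G_cont, Hx).
assert (W_cont : forall x, a <= x <= b -> continuity_pt W x)
  by (intros x Hx; apply continuity_pt_filterlim, continuous_exp_weight, r_cont, Hx).
destruct (mvt_interior H (fun x => exp (- l1 * x) * r x) a t (proj1 Ht)) as [c [Hc Hc']].
{ intros; apply H_der; lra. } { intros; apply H_cont; lra. }
destruct (mvt_interior H (fun x => exp (- l1 * x) * r x) t b (proj2 Ht)) as [d [Hd Hd']].
{ intros; apply H_der; lra. } { intros; apply H_cont; lra. }
destruct (mvt_interior W (fun x => exp (- l0 * x) * L2_on l0 l1 G G1 G2 x) c d ltac:(lra))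
  as [e [He He']].
{ intros; apply W_der; lra. } { intros; apply W_cont; lra. }
unfold H in Hc', Hd'. rewrite G_a in Hc'. rewrite G_b in Hd'.
pose proof (exp_pos (- l1 * t)). pose proof (exp_pos (- l0 * e)).
pose proof (exp_pos (- l1 * c)). pose proof (exp_pos (- l0 * c)).
pose proof (exp_pos (- l1 * d)). pose proof (exp_pos (- l0 * d)).
(* The mean value theorem on H pins down r at c and d in terms of G t. *)
assert (r_c : r c = exp (- l1 * t) * G t / (exp (- l1 * c) * (t - a))).
{ replace (exp (- l1 * t) * G t) with (exp (- l1 * c) * r c * (t - a)) by lra.
  field; lra. }
assert (r_d : r d = - exp (- l1 * t) * G t / (exp (- l1 * d) * (b - t))).
{ replace (- exp (- l1 * t) * G t) with (exp (- l1 * d) * r d * (b - t)) by lra.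
  field; lra. }
exists e, (exp (- l1 * t)
  * (exp (- l0 * c) / (exp (- l1 * c) * (t - a)) + exp (- l0 * d) / (exp (- l1 * d) * (b - t)))
  / (exp (- l0 * e) * (d - c))).
split; [lra| split].
- apply Rdiv_lt_0_compat; [apply Rmult_lt_0_compat; [lra|]|apply Rmult_lt_0_compat; lra].
  apply Rplus_lt_0_compat; apply Rdiv_lt_0_compat; try apply Rmult_lt_0_compat; lra.
- (* The mean value theorem on W then expresses L G at e through r c and r d. *)
  replace (L2_on l0 l1 G G1 G2 e) with ((W d - W c) / (exp (- l0 * e) * (d - c)))
    by (rewrite He'; field; lra).
  unfold W. rewrite r_c, r_d. field. lra.
Qed.

Lemma max_principle_weak :
  (forall x, a < x < b -> L2_on l0 l1 G G1 G2 x <= 0) ->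
  forall t, a < t < b -> 0 <= G t.
Proof.
intros HL t Ht. destruct (L2_on_opposite_sign t Ht) as [e [k [He [Hk HLe]]]].
specialize (HL e He). rewrite HLe in HL. nra.
Qed.

Lemma max_principle_strict :
  (forall x, a < x < b -> L2_on l0 l1 G G1 G2 x < 0) ->
  forall t, a < t < b -> 0 < G t.
Proof.
intros HL t Ht. destruct (L2_on_opposite_sign t Ht) as [e [k [He [Hk HLe]]]].
specialize (HL e He). rewrite HLe in HL. nra.
Qed.
End MaximumPrinciple.

Lemma Dm_of_is_derive lam (f : R -> R) t l : is_derive f t l -> Dm lam f t = l - lam * f t.
Proof. intros Hf. unfold Dm. now rewrite (is_derive_unique f t l Hf). Qed.

Lemma Lop2_eq l0 l1 (u u1 u2 : R -> R) :
  (forall x, is_derive u x (u1 x)) -> (forall x, is_derive u1 x (u2 x)) ->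
  forall t, Lop [l0; l1] u t = L2_on l0 l1 u u1 u2 t.
Proof.
intros Hu Hu1 t. change (Dm l0 (Dm l1 u) t = L2_on l0 l1 u u1 u2 t).
assert (HD : forall x, Dm l1 u x = u1 x - l1 * u x)
  by (intros x; apply Dm_of_is_derive, Hu).
rewrite (Dm_of_is_derive l0 _ t (u2 t - l1 * u1 t)), HD; [unfold L2_on; ring|].
apply (is_derive_ext (fun x => u1 x - l1 * u x)); [intros; symmetry; apply HD|].
apply (is_derive_minus u1 (fun x => l1 * u x)); [apply Hu1| apply is_derive_scal, Hu].
Qed.

Lemma Lop3_eq l0 l1 (u u1 u2 u3 : R -> R) :
  (forall x, is_derive u x (u1 x)) -> (forall x, is_derive u1 x (u2 x)) ->
  (forall x, is_derive u2 x (u3 x)) ->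
  forall t, Lop [l0; l1; 0] u t = L2_on l0 l1 u1 u2 u3 t.
Proof.
intros Hu Hu1 Hu2 t.
assert (HD : forall x, Dm 0 u x = u1 x)
  by (intros x; rewrite (Dm_of_is_derive 0 u x (u1 x) (Hu x)); ring).
change (Lop [l0; l1] (Dm 0 u) t = L2_on l0 l1 u1 u2 u3 t).
rewrite (Lop2_eq l0 l1 (Dm 0 u) u2 u3); [unfold L2_on; now rewrite HD| |exact Hu2].
intros x. apply (is_derive_ext u1); [intros; symmetry; apply HD| apply Hu1].
Qed.

Lemma Ck3_of_derivatives (u u1 u2 u3 : R -> R) :
  (forall x, is_derive u x (u1 x)) -> (forall x, is_derive u1 x (u2 x)) ->
  (forall x, is_derive u2 x (u3 x)) -> (forall x, continuous u3 x) -> Ck 3 u.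
Proof.
intros Hu Hu1 Hu2 Hu3.
assert (D1 : forall x, Derive_n u 1 x = u1 x)
  by (intros x; apply is_derive_unique, Hu).
assert (D2 : forall x, Derive_n u 2 x = u2 x).
{ intros x. change (Derive (Derive_n u 1) x = u2 x).
  rewrite (Derive_ext _ u1 x D1). apply is_derive_unique, Hu1. }
assert (D3 : forall x, Derive_n u 3 x = u3 x).
{ intros x. change (Derive (Derive_n u 2) x = u3 x).
  rewrite (Derive_ext _ u2 x D2). apply is_derive_unique, Hu2. }
split.
- intros n x Hn. destruct n as [|[|[|[|n]]]]; try lia; simpl ex_derive_n.
  + exact I.
  + exists (u1 x); apply Hu.
  + apply (ex_derive_ext u1); [intros; symmetry; apply D1| exists (u2 x); apply Hu1].
  + apply (ex_derive_ext u2); [intros; symmetry; apply D2| exists (u3 x); apply Hu2].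
- intros x. apply (continuous_ext u3); [intros; symmetry; apply D3| apply Hu3].
Qed.

Lemma derivatives_of_Ck3 u : Ck 3 u ->
  (forall x, is_derive u x (Derive u x)) /\
  (forall x, is_derive (Derive u) x (Derive (Derive u) x)) /\
  (forall x, continuous (Derive (Derive u)) x).
Proof.
intros [Hd _]. split; [|split]; intros x.
- apply Derive_correct, (Hd 1%nat x); lia.
- apply Derive_correct, (Hd 2%nat x); lia.
- apply (ex_derive_continuous (K := R_AbsRing) (V := R_NormedModule)), (Hd 3%nat x); lia.
Qed.

Lemma is_Omega_of_factorization a b l0 l1 (u Q : R -> R) :
  (forall x, is_derive u x (l1 * u x + Q x)) ->
  (forall x, is_derive Q x (l0 * Q x - 1)) ->
  u a = 0 -> u b = 0 -> is_Omega a b l0 l1 u.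
Proof.
intros Hu HQ ua ub.
set (u1 x := l1 * u x + Q x).
set (u2 x := l1 * u1 x + (l0 * Q x - 1)).
set (u3 x := l1 * u2 x + l0 * (l0 * Q x - 1)).
assert (Hu1 : forall x, is_derive u1 x (u2 x))
  by (intros x; apply (is_derive_plus (fun s => l1 * u s) Q); [apply is_derive_scal|]; auto).
assert (Hu2 : forall x, is_derive u2 x (u3 x)).
{ intros x. apply (is_derive_plus (fun s => l1 * u1 s) (fun s => l0 * Q s - 1)).
  - apply is_derive_scal, Hu1.
  - replace (l0 * (l0 * Q x - 1)) with (l0 * (l0 * Q x - 1) - 0) by ring.
    apply (is_derive_minus (fun s => l0 * Q s) (fun _ => 1)).
    + apply is_derive_scal, HQ.
    + apply (is_derive_const (K := R_AbsRing) (V := R_NormedModule)). }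
assert (Hu3 : forall x, continuous u3 x).
{ intros x. apply (continuous_plus (U := R_UniformSpace) (V := R_NormedModule)
    (fun s => l1 * u2 s) (fun s => l0 * (l0 * Q s - 1))).
  - apply (continuous_scal_r l1 u2), (continuous_of_is_derive _ _ _ (Hu2 x)).
  - apply (continuous_scal_r l0 (fun s => l0 * Q s - 1)).
    apply (continuous_minus (fun s => l0 * Q s) (fun _ => 1)).
    + apply (continuous_scal_r l0 Q), (continuous_of_is_derive _ _ _ (HQ x)).
    + apply (continuous_const (U := R_UniformSpace) (V := R_UniformSpace)). }
split; [split|].
- exact (Ck3_of_derivatives u u1 u2 u3 Hu Hu1 Hu2 Hu3).
- intros t. rewrite (Lop3_eq l0 l1 u u1 u2 u3 Hu Hu1 Hu2).
  unfold L2_on, u3, u2. ring.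
- split; [exact ua| split; [exact ub|]].
  intros t. rewrite (Lop2_eq l0 l1 u u1 u2 Hu Hu1).
  unfold L2_on, u2, u1. ring.
Qed.

(** Solution operator of (D - lam) y = h with y a = 0 (variation of constants). *)
Definition sol (a lam : R) (h : R -> R) (t : R) : R :=
  exp (lam * t) * RInt (fun s => exp (- lam * s) * h s) a t.

Lemma sol_at_start a lam h : sol a lam h a = 0.
Proof. unfold sol. rewrite RInt_point. apply Rmult_0_r. Qed.

Lemma sol_derive a lam h t : (forall x, continuous h x) ->
  is_derive (sol a lam h) t (lam * sol a lam h t + h t).
Proof.
intros Hh.
assert (Hint_cont : forall x, continuous (fun s => exp (- lam * s) * h s) x)
  by (intros; apply continuous_exp_weight, Hh).
assert (Hint : is_derive (fun x => RInt (fun s => exp (- lam * s) * h s) a x) t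
                 (exp (- lam * t) * h t)).
{ apply (is_derive_RInt (fun s => exp (- lam * s) * h s) _ a t); [|apply Hint_cont].
  apply filter_forall. intros y. apply (RInt_correct (V := R_CompleteNormedModule)).
  apply ex_RInt_continuous. intros; apply Hint_cont. }
replace (lam * sol a lam h t + h t) with
  (exp (lam * t) * (exp (- lam * t) * h t
     + lam * RInt (fun s => exp (- lam * s) * h s) a t)).
- exact (is_derive_exp_weight lam _ t _ Hint).
- assert (Hcancel : exp (lam * t) * exp (- lam * t) = 1).
  { rewrite <- exp_plus. replace (lam * t + - lam * t) with 0 by ring. apply exp_0. }
  unfold sol. rewrite Rmult_plus_distr_l, <- Rmult_assoc, Hcancel. ring.
Qed.

Lemma sol_pos a lam h t : (forall x, continuous h x) -> (forall x, 0 < h x) ->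
  a < t -> 0 < sol a lam h t.
Proof.
intros Hc Hpos Hat. apply Rmult_lt_0_compat; [apply exp_pos|].
apply RInt_gt_0; [exact Hat| |].
- intros x _. apply Rmult_lt_0_compat; [apply exp_pos| apply Hpos].
- intros x _. apply continuous_exp_weight, Hc.
Qed.

(** Existence of Omega: with V = sol (-1) for (D - l0) and E = e^{l0 t}, the
    function sol_{l1} (V + c E) solves L u = -1, u a = 0 for every c, and the
    constant c is tuned so that also u b = 0. *)
Lemma exists_Omega a b l0 l1 : a < b -> exists u, is_Omega a b l0 l1 u.
Proof.
intros hab.
set (V := sol a l0 (fun _ => -1)).
set (E t := exp (l0 * t)).
set (u0 := sol a l1 V).
set (w := sol a l1 E).
assert (const_cont : forall (k x : R), continuous (fun _ : R => k) x)
  by (intros; apply (continuous_const (U := R_UniformSpace) (V := R_UniformSpace))).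
assert (V_der : forall x, is_derive V x (l0 * V x + -1))
  by (intros; apply sol_derive, const_cont).
assert (E_der : forall x, is_derive E x (l0 * E x))
  by (intros; unfold E; auto_derive; [exact I| ring]).
assert (V_cont : forall x, continuous V x)
  by (intros x; exact (continuous_of_is_derive _ _ _ (V_der x))).
assert (E_cont : forall x, continuous E x)
  by (intros x; exact (continuous_of_is_derive _ _ _ (E_der x))).
assert (w_b : 0 < w b) by (apply sol_pos; [exact E_cont| intros; apply exp_pos| exact hab]).
set (c := - u0 b / w b).
exists (fun t => u0 t + c * w t).
apply (is_Omega_of_factorization a b l0 l1 _ (fun t => V t + c * E t)).
- intros x. replace (l1 * (u0 x + c * w x) + (V x + c * E x))
    with ((l1 * u0 x + V x) + c * (l1 * w x + E x)) by ring.
  apply (is_derive_plus u0 (fun t => c * w t)); [|apply is_derive_scal];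
    apply sol_derive; assumption.
- intros x. replace (l0 * (V x + c * E x) - 1)
    with ((l0 * V x + -1) + c * (l0 * E x)) by ring.
  apply (is_derive_plus V (fun t => c * E t)); [|apply is_derive_scal]; auto.
- unfold u0, w. rewrite !sol_at_start. ring.
- unfold c. field. lra.
Qed.

Lemma L2_on_le_sup a b l0 l1 (f f1 f2 : R -> R) : a <= b -> C2_on a b f f1 f2 ->
  forall t, a <= t <= b ->
  Rabs (L2_on l0 l1 f f1 f2 t) <= sup_on a b (fun s => Rabs (L2_on l0 l1 f f1 f2 s)).
Proof.
intros hab [Hf [Hf1 Hf2]].
pose proof (continuous_clamp_ext a b f hab (cont_on_of_has_deriv_on a b f f1 Hf)) as Cf.
pose proof (continuous_clamp_ext a b f1 hab (cont_on_of_has_deriv_on a b f1 f2 Hf1)) as Cf1.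
pose proof (continuous_clamp_ext a b f2 hab Hf2) as Cf2.
apply sup_on_ub_continuous; [exact hab|]. intros x.
apply continuous_Rabs_comp. unfold L2_on.
apply (continuous_minus (fun s => f2 (clamp a b s) - l1 * f1 (clamp a b s))
  (fun s => l0 * (f1 (clamp a b s) - l1 * f (clamp a b s)))).
- apply (continuous_minus (fun s => f2 (clamp a b s))); [apply Cf2|].
  apply (continuous_scal_r l1 (fun s => f1 (clamp a b s))), Cf1.
- apply (continuous_scal_r l0 (fun s => f1 (clamp a b s) - l1 * f (clamp a b s))).
  apply (continuous_minus (fun s => f1 (clamp a b s))); [apply Cf1|].
  apply (continuous_scal_r l1 (fun s => f (clamp a b s))), Cf.
Qed.

Section OmegaProperties.
Variables (a b l0 l1 : R) (u u1 u2 : R -> R).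
Hypothesis hab : a < b.
Hypothesis u_der : forall x, is_derive u x (u1 x).
Hypothesis u1_der : forall x, is_derive u1 x (u2 x).
Hypothesis u2_cont : forall x, continuous u2 x.
Hypothesis u_L2 : forall x, L2_on l0 l1 u u1 u2 x = -1.
Hypothesis u_a : u a = 0.
Hypothesis u_b : u b = 0.

Lemma u_continuous x : continuous u x.
Proof. exact (continuous_of_is_derive u x _ (u_der x)). Qed.

Lemma Omega_positive : forall t, a < t < b -> 0 < u t.
Proof.
apply (max_principle_strict a b l0 l1 u u1 u2); auto.
- intros; apply u_continuous.
- intros x _. exact (continuous_of_is_derive u1 x _ (u1_der x)).
- intros x _. rewrite u_L2. lra.
Qed.

(** Comparison: if |L f| <= K on [a,b] and f vanishes at a and b, then
    s f <= K u for every |s| <= 1, by the weak maximum principle applied to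
    K u - s f (with f extended outside [a,b] by clamping). *)
Lemma comparison_bound (f f1 f2 : R -> R) K s :
  C2_on a b f f1 f2 -> f a = 0 -> f b = 0 ->
  (forall x, a <= x <= b -> Rabs (L2_on l0 l1 f f1 f2 x) <= K) -> Rabs s <= 1 ->
  forall t, a <= t <= b -> s * f t <= K * u t.
Proof.
intros [Hf [Hf1 _]] fa fb HK Hs t Ht.
set (fc x := f (clamp a b x)). set (f1c x := f1 (clamp a b x)).
assert (Cf : forall x, continuous fc x)
  by (apply continuous_clamp_ext; [lra| exact (cont_on_of_has_deriv_on a b f f1 Hf)]).
assert (Cf1 : forall x, continuous f1c x)
  by (apply continuous_clamp_ext; [lra| exact (cont_on_of_has_deriv_on a b f1 f2 Hf1)]).
assert (Hfc : fc t = f t) by (unfold fc; now rewrite clamp_id).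
enough (Hpos : 0 <= K * u t - s * fc t).
{ rewrite Hfc in Hpos. lra. }
assert (Hends : forall e, e = a \/ e = b -> 0 <= K * u e - s * fc e).
{ intros e [-> | ->]; unfold fc; rewrite clamp_id by lra;
    rewrite ?u_a, ?u_b, ?fa, ?fb; lra. }
destruct (Req_dec t a) as [->|Hta]; [apply Hends; auto|].
destruct (Req_dec t b) as [->|Htb]; [apply Hends; auto|].
apply (max_principle_weak a b l0 l1 (fun x => K * u x - s * fc x)
  (fun x => K * u1 x - s * f1c x) (fun x => K * u2 x - s * f2 x)); [| | | | | | |lra].
- intros x _. apply (continuous_minus (fun y => K * u y) (fun y => s * fc y)).
  + apply (continuous_scal_r K u), u_continuous.
  + apply (continuous_scal_r s fc), Cf.
- intros x _. apply (continuous_minus (fun y => K * u1 y) (fun y => s * f1c y)).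
  + apply (continuous_scal_r K u1), (continuous_of_is_derive u1 x _ (u1_der x)).
  + apply (continuous_scal_r s f1c), Cf1.
- intros x Hx. apply (is_derive_minus (fun y => K * u y) (fun y => s * fc y));
    apply is_derive_scal; [apply u_der|].
  unfold f1c. rewrite clamp_id by lra. exact (is_derive_clamp_ext a b f f1 x Hf Hx).
- intros x Hx. apply (is_derive_minus (fun y => K * u1 y) (fun y => s * f1c y));
    apply is_derive_scal; [apply u1_der| exact (is_derive_clamp_ext a b f1 f2 x Hf1 Hx)].
- unfold fc. rewrite clamp_id, u_a, fa by lra. ring.
- unfold fc. rewrite clamp_id, u_b, fb by lra. ring.
- intros x Hx.
  (* L (K u - s f) = -K - s L f, and |s L f| <= K. *)
  assert (Hsf : Rabs (s * L2_on l0 l1 f f1 f2 x) <= K).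
  { rewrite Rabs_mult. specialize (HK x ltac:(lra)).
    pose proof (Rabs_pos s). pose proof (Rabs_pos (L2_on l0 l1 f f1 f2 x)). nra. }
  pose proof (Rle_abs (- (s * L2_on l0 l1 f f1 f2 x))) as Habs. rewrite Rabs_Ropp in Habs.
  pose proof (u_L2 x) as HLu. unfold L2_on, fc, f1c in *. rewrite !clamp_id by lra.
  nra.
Qed.

Lemma Omega_admissible : admissible_const a b l0 l1 (sup_on a b (fun t => Rabs (u t))).
Proof.
intros f f1 f2 HC fa fb t Ht.
set (K := sup_on a b (fun s => Rabs (L2_on l0 l1 f f1 f2 s))).
set (M := sup_on a b (fun s => Rabs (u s))).
assert (HK : forall x, a <= x <= b -> Rabs (L2_on l0 l1 f f1 f2 x) <= K)
  by (apply L2_on_le_sup; [lra| exact HC]).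
assert (HM : forall x, a <= x <= b -> Rabs (u x) <= M).
{ apply sup_on_ub_continuous; [lra|]. intros x. apply continuous_Rabs_comp.
  apply continuous_clamp_ext; [lra|]. apply cont_on_of_continuous, u_continuous. }
assert (K0 : 0 <= K) by (eapply Rle_trans; [apply Rabs_pos| apply (HK a); lra]).
assert (Hunit : forall s, s = 1 \/ s = -1 -> Rabs s <= 1)
  by (intros s [-> | ->]; unfold Rabs; destruct Rcase_abs; lra).
pose proof (comparison_bound f f1 f2 K 1 HC fa fb HK (Hunit 1 (or_introl eq_refl)) t Ht).
pose proof (comparison_bound f f1 f2 K (-1) HC fa fb HK (Hunit (-1) (or_intror eq_refl)) t Ht).
pose proof (HM t Ht). pose proof (Rle_abs (u t)).
apply Rabs_le. nra.
Qed.

(** sup |u| is the smallest admissible constant, as u itself has |L u| = 1. *)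
Lemma Omega_minimal C : admissible_const a b l0 l1 C ->
  sup_on a b (fun t => Rabs (u t)) <= C.
Proof.
intros HC.
assert (HuC2 : C2_on a b u u1 u2).
{ split; [|split].
  - apply has_deriv_on_of_is_derive, u_der.
  - apply has_deriv_on_of_is_derive, u1_der.
  - apply cont_on_of_continuous, u2_cont. }
assert (HLu : forall x, Rabs (L2_on l0 l1 u u1 u2 x) = 1)
  by (intros x; rewrite u_L2; unfold Rabs; destruct Rcase_abs; lra).
assert (Hsup : sup_on a b (fun x => Rabs (L2_on l0 l1 u u1 u2 x)) = 1).
{ apply Rle_antisym.
  - apply sup_on_le; [lra|]. intros; rewrite HLu; lra.
  - rewrite <- (HLu a).
    apply (sup_on_ub a b (fun x => Rabs (L2_on l0 l1 u u1 u2 x)) 1); [intros; rewrite HLu|]; lra. }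
apply sup_on_le; [lra|]. intros t Ht.
pose proof (HC u u1 u2 HuC2 u_a u_b t Ht) as Hbound.
rewrite Hsup, Rmult_1_r in Hbound. exact Hbound.
Qed.
End OmegaProperties.

Theorem mainTheorem4 (lam0 lam1 a b : R) (hab : a < b) :
  (exists u, is_Omega a b lam0 lam1 u) /\
  forall u, is_Omega a b lam0 lam1 u ->
    (admissible_const a b lam0 lam1 (sup_on a b (fun t => Rabs (u t))) /\
     forall C, admissible_const a b lam0 lam1 C ->
       sup_on a b (fun t => Rabs (u t)) <= C) /\
    (forall t, a < t < b -> 0 < u t).
Proof.
split; [exact (exists_Omega a b lam0 lam1 hab)|].
intros u [[HCk _] [ua [ub HLop]]].
destruct (derivatives_of_Ck3 u HCk) as [Hu1 [Hu2 Hu2c]].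
assert (HL2 : forall x, L2_on lam0 lam1 u (Derive u) (Derive (Derive u)) x = -1)
  by (intros x; rewrite <- (Lop2_eq lam0 lam1 u _ _ Hu1 Hu2); apply HLop).
split; [split|].
- apply (Omega_admissible a b lam0 lam1 u (Derive u) (Derive (Derive u))); assumption.
- apply (Omega_minimal a b lam0 lam1 u (Derive u) (Derive (Derive u))); assumption.
- apply (Omega_positive a b lam0 lam1 u (Derive u) (Derive (Derive u))); assumption.
Qed.
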